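(* Assume the standing hypotheses (H). Then $\frac{n+k-1}{3}$ is an integer.
   Context: A list assignment $L$ assigns to each vertex $v$ a set $L(v)$ of colors; an $L$-coloring is a proper coloring $f$ with $f(v)\in L(v)$ for all $v$; $\mathrm{ch}$ denotes choice number and $\chi$ chromatic number. A part of a complete multipartite graph is one of its maximal stable sets. Standing hypotheses (H): $k\ge1$ and $n\ge 2k+2$ are integers; $G$ is a complete $k$-partite graph (exactly $k$ nonempty parts) on $n$ vertices; $L$ is a list assignment for $G$ with $|L(v)|\ge\lceil (n+k-1)/3\rceil$ for every vertex $v$; $G$ has no $L$-coloring; $\left|\bigcup_{v\in V(G)}L(v)\right|\le n-1$; and every graph $H$ with fewer than $n$ vertices satisfies $\mathrm{ch}(H)\le\max\{\chi(H),\lceil(|V(H)|+\chi(H)-1)/3\rceil\}$. *)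

From mathcomp Require Import all_boot.
Set Implicit Arguments. Unset Strict Implicit. Unset Printing Implicit Defensive.

(* A (simple) graph: vertex type T : finType, adjacency e : rel T,
   required to be symmetric and irreflexive where used. *)

Definition proper_col (T : finType) (C : Type) (e : rel T) (f : T -> C) : Prop :=
  forall x y, e x y -> f x <> f y.

Definition L_coloring (T : finType) (C : finType) (e : rel T)
  (L : T -> {set C}) (f : T -> C) : Prop :=
  proper_col e f /\ forall v, f v \in L v.

Definition choosable (T : finType) (e : rel T) (m : nat) : Prop :=
  forall (C : finType) (L : T -> {set C}),
    (forall v, m <= #|L v|) -> exists f : T -> C, L_coloring e L f.

Definition colorableb (T : finType) (e : rel T) (k : nat) : bool :=
  [exists f : {ffun T -> 'I_k}, [forall x, forall y, e x y ==> (f x != f y)]].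

(* chromatic number: least k <= |V| such that (T,e) is k-colourable
   (a loopless graph is always |V|-colourable). *)
Definition chi (T : finType) (e : rel T) : nat :=
  \big[minn/#|T|]_(k < #|T|.+1 | colorableb e k) (k : nat).

Definition ceil3 (a : nat) : nat := (a + 2) %/ 3.

Definition complete_multipartite (T : finType) (e : rel T) (k : nat)
  (p : T -> 'I_k) : Prop :=
  (forall i : 'I_k, exists x, p x = i) /\ (forall x y, e x y = (p x != p y)).

From mathcomp Require Import all_boot zify.

Set Implicit Arguments.
Unset Strict Implicit.
Unset Printing Implicit Defensive.

(* Suppose 3 does not divide n + k - 1 and put m = ceil3 (n+k-1),
   the common lower bound on the list sizes; note m >= k + 1 since n >= 2k+2.
   - If no colour lies in the lists of two distinct vertices of the same part,
     every colour lies in at most k lists, so n * m <= sum_v |L v| <= (n-1) k,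
     which contradicts n + k - 1 <= 3m and n >= 2k + 2 (this case does not
     even need the divisibility assumption).
   - Otherwise two distinct vertices u, w of one part share a colour c.  Delete
     them and delete c from all other lists: the remaining graph has n - 2
     vertices, chromatic number at most k, and lists of size at least m - 1,
     which (because 3 does not divide n + k - 1) is at least
     max(chi, ceil3((n-2) + chi - 1)).  The minimality hypothesis colours it,
     and giving u and w the colour c extends this to an L-colouring of G. *)

Lemma bigmin_le (I : eqType) (s : seq I) (P : pred I) (F : I -> nat) x0 i :
  i \in s -> P i -> \big[minn/x0]_(j <- s | P j) F j <= F i.
Proof.
elim: s => [//|a s IH]; rewrite inE big_cons => /orP [/eqP<-|Hi] Pi.
  by rewrite Pi geq_minl.
case: (P a); last exact: IH.
by rewrite geq_min IH ?orbT.
Qed.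

Lemma chi_le_coloring (T : finType) (e : rel T) (k : nat) (g : T -> 'I_k) :
  k <= #|T| -> (forall x y, e x y -> g x != g y) -> chi e <= k.
Proof.
move=> le_k_T g_proper.
have col_k : colorableb e k.
  apply/existsP; exists [ffun x => g x].
  by apply/forallP => x; apply/forallP => y; apply/implyP => /g_proper; rewrite !ffunE.
exact: (@bigmin_le _ (index_enum 'I_#|T|.+1) (fun i => colorableb e i)
          (fun i => (i : nat)) #|T| (Ordinal (le_k_T : k < #|T|.+1))
          (mem_index_enum _) col_k).
Qed.

(* If within each fibre of p : T -> 'I_k the lists are pairwise disjoint, then
   each colour occurs in at most k lists, so the list sizes sum to at most
   k times the number of colours used. *)
Lemma sum_lists_le (k : nat) (T C : finType) (p : T -> 'I_k) (L : T -> {set C}) :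
  (forall u w c, p u = p w -> c \in L u -> c \in L w -> u = w) ->
  \sum_(v : T) #|L v| <= #|\bigcup_(v : T) L v| * k.
Proof.
move=> fibre_disjoint; set U := \bigcup_(v : T) L v.
have card_L v : #|L v| = \sum_(c in U) (c \in L v : nat).
  rewrite -big_mkcondr /= -sum1_card; apply: eq_bigl => c.
  case Lvc: (c \in L v); rewrite ?andbF ?andbT //=.
  by apply/esym/bigcupP; exists v.
rewrite (eq_bigr _ (fun v _ => card_L v)) exchange_big /= -sum_nat_const.
apply: leq_sum => c _.
have -> : \sum_(v : T) (c \in L v : nat) = #|[set v | c \in L v]|.
  by rewrite -big_mkcondr /= -sum1_card; apply: eq_bigl => v; rewrite inE.
rewrite -[k]card_ord; apply: (@leq_card_in _ _ p) => u w.
by rewrite !inE => Lu Lw puw; apply: fibre_disjoint puw Lu Lw.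
Qed.

Lemma extend_coloring (T C : finType) (e : rel T) (L : T -> {set C})
    (P : pred T) (c : C) (f' : {x : T | P x} -> C) :
  (forall x y, ~~ P x -> ~~ P y -> ~~ e x y) ->
  (forall x, ~~ P x -> c \in L x) ->
  L_coloring (fun x y : {x : T | P x} => e (val x) (val y))
             (fun x => L (val x) :\ c) f' ->
  exists f : T -> C, L_coloring e L f.
Proof.
move=> out_stable out_c [f'_proper f'_L].
pose f x := if insub x is Some y then f' y else c.
have f_cases x : (exists y, val y = x /\ f x = f' y) \/ (~~ P x /\ f x = c).
  by rewrite /f; case: insubP => [y _ <-|nPx]; [left; exists y | right].
have f'_ne_c y : f' y <> c by have := f'_L y; rewrite !inE => /andP [/eqP].
exists f; split.
  move=> x y.
  case: (f_cases x) => [[x' [<- ->]]|[nPx ->]];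
    case: (f_cases y) => [[y' [<- ->]]|[nPy ->]] => exy.
  - exact: f'_proper exy.
  - exact: f'_ne_c.
  - exact/nesym/f'_ne_c.
  - by move: (out_stable x y nPx nPy); rewrite exy.
move=> x; case: (f_cases x) => [[x' [<- ->]]|[nPx ->]]; last exact: out_c.
by have := f'_L x'; rewrite !inE => /andP [].
Qed.

Lemma card_punctured2 (T : finType) (u w : T) :
  u != w -> #|[pred x | (x != u) && (x != w)]| = #|T| - 2.
Proof.
move=> neq_uw.
have -> : #|[pred x | (x != u) && (x != w)]| = #|[set: T] :\ u :\ w|.
  by apply: eq_card => x; rewrite !inE andbT andbC.
have := cardsD1 u [set: T]; have := cardsD1 w ([set: T] :\ u).
by rewrite !inE eq_sym neq_uw cardsT /=; lia.
Qed.

Lemma ceil3_drop2 (n k : nat) :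
  2 <= n -> 1 <= k -> ~~ (3 %| n + k - 1) ->
  ceil3 (n - 2 + k - 1) <= ceil3 (n + k - 1) - 1.
Proof. by rewrite /ceil3 /dvdn; lia. Qed.

Lemma few_colours_contradiction (n k U S : nat) :
  1 <= k -> 2 * k + 2 <= n -> n * ceil3 (n + k - 1) <= S ->
  S <= U * k -> U <= n - 1 -> False.
Proof.
move=> k_ge1 n_ge le_nm_S le_S_Uk le_U.
have m3 : n + k - 1 <= 3 * ceil3 (n + k - 1) by rewrite /ceil3; lia.
have h1 : n * (n + k - 1) <= n * (3 * ceil3 (n + k - 1)) by rewrite leq_mul2l m3 orbT.
have h2 : U * k <= (n - 1) * k by rewrite leq_mul2r le_U orbT.
nia.
Qed.

Lemma shared_colour_or_disjoint (T C : finType) (I : eqType) (p : T -> I)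
    (L : T -> {set C}) :
  (exists u w c, [/\ u != w, p u = p w, c \in L u & c \in L w]) \/
  (forall u w c, p u = p w -> c \in L u -> c \in L w -> u = w).
Proof.
case: (boolP [exists u, exists w, exists c,
              [&& u != w, p u == p w, c \in L u & c \in L w]]).
  case/existsP=> u /existsP [w /existsP [c /and4P [? /eqP ? ? ?]]].
  by left; exists u, w, c.
move=> none; right=> u w c p_uw Lu Lw; apply/eqP/negPn/negP => neq_uw.
apply: (negP none); apply/existsP; exists u; apply/existsP; exists w.
by apply/existsP; exists c; rewrite neq_uw p_uw eqxx Lu Lw.
Qed.

Section SharedColour.

Variables (k n : nat) (T : finType) (e : rel T) (p : T -> 'I_k).
Variables (C : finType) (L : T -> {set C}).
Hypothesis k_ge1 : 1 <= k.
Hypothesis n_ge : 2 * k + 2 <= n.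
Hypothesis e_parts : forall x y, e x y = (p x != p y).
Hypothesis card_T : #|T| = n.
Hypothesis L_big : forall v, ceil3 (n + k - 1) <= #|L v|.
Hypothesis minimal : forall (V : finType) (h : rel V), symmetric h ->
  irreflexive h -> #|V| < n -> choosable h (maxn (chi h) (ceil3 (#|V| + chi h - 1))).
Hypothesis not_dvd : ~~ (3 %| n + k - 1).

(* Second case: two distinct vertices u, w of one part sharing a colour c.
   Colour G - {u, w} from the lists without c by minimality, then give c
   to u and w. *)
Lemma shared_colour_colouring (u w : T) (c : C) :
  u != w -> p u = p w -> c \in L u -> c \in L w ->
  exists f : T -> C, L_coloring e L f.
Proof.
move=> neq_uw p_uw Lu_c Lw_c.
pose P : pred T := [pred x | (x != u) && (x != w)].
pose V : finType := {x : T | P x}.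
pose h : rel V := fun x y => e (val x) (val y).
have card_V : #|V| = n - 2 by rewrite card_sig card_punctured2 ?card_T.
have h_sym : symmetric h by move=> x y; rewrite /h !e_parts eq_sym.
have h_irr : irreflexive h by move=> x; rewrite /h e_parts eqxx.
have chi_h : chi h <= k.
  apply: (@chi_le_coloring _ h k (fun x => p (val x))); first lia.
  by move=> x y; rewrite /h e_parts.
(* The reduced lists lose at most one colour, and are still large enough. *)
have drop2 := @ceil3_drop2 n k ltac:(lia) k_ge1 not_dvd.
have V_small : #|V| < n by rewrite card_V; lia.
have [|f' f'_col] := minimal h_sym h_irr V_small (L := fun x => L (val x) :\ c).
  move=> x; have := cardsD1 c (L (val x)); have := L_big (val x).
  rewrite geq_max card_V; move: chi_h drop2; rewrite /ceil3.
  by case: (c \in _) => /=; lia.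
apply: (extend_coloring _ _ f'_col) => x.
  move=> y; rewrite /P /= !negb_and !negbK e_parts.
  by move=> /orP [] /eqP -> /orP [] /eqP ->; rewrite ?p_uw eqxx.
by rewrite /P /= negb_and !negbK => /orP [] /eqP ->.
Qed.

End SharedColour.

Theorem lemma14 (k n : nat) (T : finType) (e : rel T) (p : T -> 'I_k)
  (C : finType) (L : T -> {set C}) :
  1 <= k ->
  2 * k + 2 <= n ->
  complete_multipartite e p ->
  #|T| = n ->
  (forall v, ceil3 (n + k - 1) <= #|L v|) ->
  ~ (exists f : T -> C, L_coloring e L f) ->
  #|\bigcup_(v : T) L v| <= n - 1 ->
  (forall (V : finType) (h : rel V), symmetric h -> irreflexive h ->
     #|V| < n ->
     choosable h (maxn (chi h) (ceil3 (#|V| + chi h - 1)))) ->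
  3 %| (n + k - 1).
Proof.
move=> k_ge1 n_ge [_ e_parts] card_T L_big no_col U_small minimal.
apply/negPn/negP => not_dvd.
have [[u [w [c [neq_uw p_uw Lu_c Lw_c]]]] | fibre_disjoint] :=
  shared_colour_or_disjoint p L.
  apply: no_col.
  exact: (shared_colour_colouring k_ge1 n_ge e_parts card_T L_big minimal
            not_dvd neq_uw p_uw Lu_c Lw_c).
apply: (few_colours_contradiction k_ge1 n_ge _ (sum_lists_le fibre_disjoint) U_small).
by rewrite -{1}card_T -sum_nat_const; apply: leq_sum.
Qed.
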